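(* Let $A$ be an AUF algebra and let $\psi\in\mathrm{SLF}(A)$ be non-degenerate. Let $M\in\mathrm{Coh}_{\mathrm L}(A)$ be projective as a left $A$-module, and let $B=\mathrm{End}_{A,-}(M)^{\mathrm{op}}$. Then the right pseudotrace ${}^\psi\mathrm{Tr}\in\mathrm{SLF}(B)$ associated to $\psi$ and the $A$-$B$ bimodule $M$ is non-degenerate.
   Context: All algebras are associative $\mathbb C$-algebras, not necessarily unital. An idempotent is $e$ with $e^2=e$. An algebra $A$ is AUF if there is a family $(e_i)_{i\in\mathfrak I}$ of mutually orthogonal idempotents with $\dim e_iAe_j<\infty$ and $A=\sum_{i,j}e_iAe_j$. A left $A$-module $M$ is quasicoherent if $\xi\in A\xi$ for all $\xi\in M$, coherent if moreover finitely generated; $\mathrm{Coh}_{\mathrm L}(A)$ is the category of coherent left $A$-modules. $B=\mathrm{End}_{A,-}(M)^{\mathrm{op}}$ acts on $M$ on the right by $\xi\cdot T=T(\xi)$. $\mathrm{SLF}(C)$ is the space of linear $\phi:C\to\mathbb C$ with $\phi(xy)=\phi(yx)$; $\phi$ is non-degenerate if $\{x\in C:\phi(xy)=0\ \forall y\in C\}=0$. Right pseudotrace: choose an idempotent $e\in A$ and finitely many left $A$-module maps $\beta_j:Ae\to M$, $\check\beta^j:M\to Ae$ with $\sum_j\beta_j\circ\check\beta^j=\mathrm{id}_M$ (these exist since $M$ is coherent and projective); then ${}^\psi\mathrm{Tr}(y)=\sum_j\psi(\check\beta^j(\beta_j(e)y))$ for $y\in B$, independent of choices. *)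

From HB Require Import structures.
From mathcomp Require Import all_boot all_order all_algebra.
From mathcomp Require Import complex.
From mathcomp Require Import Rstruct.

Set Implicit Arguments.
Unset Strict Implicit.
Unset Printing Implicit Defensive.

Import GRing.Theory Num.Theory.
Local Open Scope ring_scope.

Definition CC : fieldType := (Rdefinitions.R)[i].

Record nuAlgebra := NuAlgebra {
  nua_sort :> lmodType CC;
  nua_mul : nua_sort -> nua_sort -> nua_sort;
  nua_mulA : forall a b c, nua_mul a (nua_mul b c) = nua_mul (nua_mul a b) c;
  nua_linl : forall (k : CC) a b c,
      nua_mul (k *: a + b) c = k *: nua_mul a c + nua_mul b c;
  nua_linr : forall (k : CC) a b c,
      nua_mul a (k *: b + c) = k *: nua_mul a b + nua_mul a c
}.

Notation "a ** b" := (nua_mul a b) (at level 40, left associativity).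

Definition AUF (A : nuAlgebra) : Prop :=
  exists (I : Type) (e : I -> A),
    (forall i, e i ** e i = e i) /\
    (forall i j, i <> j -> e i ** e j = 0) /\
    (* dim e_i A e_j < oo *)
    (forall i j, exists (n : nat) (v : 'I_n -> A),
        forall a, exists c : 'I_n -> CC, e i ** a ** e j = \sum_(k < n) c k *: v k) /\
    (forall a : A, exists r : seq (I * I * A),
        a = \sum_(t <- r) (e t.1.1 ** t.2 ** e t.1.2)).

Definition SLF (A : nuAlgebra) (phi : A -> CC) : Prop :=
  (forall (k : CC) x y, phi (k *: x + y) = k * phi x + phi y) /\
  (forall x y, phi (x ** y) = phi (y ** x)).

Definition nondegenerate_SLF (A : nuAlgebra) (phi : A -> CC) : Prop :=
  forall x : A, (forall y : A, phi (x ** y) = 0) -> x = 0.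

Record lmodule (A : nuAlgebra) := LModule {
  lm_sort :> lmodType CC;
  lm_act : A -> lm_sort -> lm_sort;
  lm_actA : forall a b m, lm_act (a ** b) m = lm_act a (lm_act b m);
  lm_linl : forall (k : CC) a b m,
      lm_act (k *: a + b) m = k *: lm_act a m + lm_act b m;
  lm_linr : forall (k : CC) a m n,
      lm_act a (k *: m + n) = k *: lm_act a m + lm_act a n
}.

Arguments lm_act {A} M a m : rename.
Notation act := (lm_act _).

Definition is_hom (A : nuAlgebra) (M N : lmodule A) (f : M -> N) : Prop :=
  (forall (k : CC) x y, f (k *: x + y) = k *: f x + f y) /\
  (forall (a : A) x, f (act a x) = act a (f x)).

Definition quasicoherent (A : nuAlgebra) (M : lmodule A) : Prop :=
  forall xi : M, exists a : A, act a (xi) = xi.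

Definition fin_generated (A : nuAlgebra) (M : lmodule A) : Prop :=
  exists (n : nat) (xi : 'I_n -> M), forall m : M,
    exists (c : 'I_n -> CC) (a : 'I_n -> A),
      m = \sum_(i < n) ((c i *: xi i) + (act (a i) (xi i))).

Definition coherent (A : nuAlgebra) (M : lmodule A) : Prop :=
  quasicoherent M /\ fin_generated M.

Definition projective (A : nuAlgebra) (M : lmodule A) : Prop :=
  forall (N N' : lmodule A) (p : N -> N') (f : M -> N'),
    is_hom p -> is_hom f -> (forall n' : N', exists n : N, p n = n') ->
    exists g : M -> N, is_hom g /\ forall m, p (g m) = f m.

(* A map Ae -> M is represented by a function A -> M whose values
   outside Ae are irrelevant; a map M -> Ae by a function M -> A with
   values in Ae. *)
Definition in_Ae (A : nuAlgebra) (e x : A) : Prop := exists a : A, x = a ** e.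

Definition hom_from_Ae (A : nuAlgebra) (M : lmodule A) (e : A) (f : A -> M) : Prop :=
  (forall (k : CC) x y, in_Ae e x -> in_Ae e y -> f (k *: x + y) = k *: f x + f y) /\
  (forall (a x : A), in_Ae e x -> f (a ** x) = act a (f x)).

Definition hom_to_Ae (A : nuAlgebra) (M : lmodule A) (e : A) (g : M -> A) : Prop :=
  (forall m, in_Ae e (g m)) /\
  (forall (k : CC) x y, g (k *: x + y) = k *: g x + g y) /\
  (forall (a : A) x, g (act a x) = a ** g x).

(* B = End_{A,-}(M)^op : elements are A-module endomorphisms of M, the
   product of B is x *_B y = y o x (so that  xi . (x y) = (xi . x) . y
   with xi . T = T xi). *)
Definition End_A (A : nuAlgebra) (M : lmodule A) (T : M -> M) : Prop := is_hom T.

Definition mulB (A : nuAlgebra) (M : lmodule A) (x y : M -> M) : M -> M :=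
  fun m => y (x m).

Definition right_pseudotrace (A : nuAlgebra) (M : lmodule A) (psi : A -> CC)
    (e : A) (n : nat) (beta : 'I_n -> A -> M) (cbeta : 'I_n -> M -> A)
    (y : M -> M) : CC :=
  \sum_(j < n) psi (cbeta j (y (beta j e))).

Definition pseudotrace_data (A : nuAlgebra) (M : lmodule A) (e : A) (n : nat)
    (beta : 'I_n -> A -> M) (cbeta : 'I_n -> M -> A) : Prop :=
  e ** e = e /\
  (forall j, hom_from_Ae e (beta j)) /\
  (forall j, hom_to_Ae e (cbeta j)) /\
  (forall m : M, \sum_(j < n) beta j (cbeta j m) = m).

Definition nondegenerate_B (A : nuAlgebra) (M : lmodule A) (phi : (M -> M) -> CC) : Prop :=
  forall x : M -> M, End_A x ->
    (forall y : M -> M, End_A y -> phi (mulB x y) = 0) ->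
    forall m : M, x m = 0.

(* For an A-linear [g : M -> A] and [eta : M], the rank-one endomorphism
   [m |-> g m . eta] has pseudotrace [psi (g eta)]: expand [eta] along the dual
   basis [beta_j, cbeta^j] and move the factors around using the symmetry of
   [psi].  If [x] pairs to zero with all of [B], apply this to
   [g = cbeta^k o x] and [a . eta]: [psi (a ** cbeta^k (x eta)) = 0] for all
   [a], so [cbeta^k (x eta) = 0] by non-degeneracy of [psi], and
   [x eta = sum_k beta_k (cbeta^k (x eta)) = 0]. *)
From HB Require Import structures.
From mathcomp Require Import all_boot all_algebra.
Set Implicit Arguments.
Unset Strict Implicit.
Unset Printing Implicit Defensive.

Import GRing.Theory.
Local Open Scope ring_scope.

Lemma linear_for_sum (R : pzRingType) (U : lmodType R) (V : zmodType)
    (s : GRing.Scale.law R V) (f : U -> V) :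
  linear_for s f -> forall (I : Type) (r : seq I) (P : pred I) (F : I -> U),
  f (\sum_(i <- r | P i) F i) = \sum_(i <- r | P i) f (F i).
Proof.
move=> fL I r P F.
pose fL' : {linear U -> V | s} := HB.pack f (GRing.isLinear.Build _ _ _ s f fL).
exact: (raddf_sum fL').
Qed.

Section RegularModule.
Variable A : nuAlgebra.

Definition regular_lmodule : lmodule A :=
  LModule (fun a b c => esym (nua_mulA a b c)) (@nua_linl A) (@nua_linr A).

End RegularModule.

Section Homs.
Variables (A : nuAlgebra) (M : lmodule A).

Lemma act0l (m : M) : act 0 m = 0.
Proof.
have := lm_linl 1 0 0 m; rewrite !scale1r addr0 -{1}[act 0 m]addr0.
by move/addrI.
Qed.

Lemma is_hom_comp (N P : lmodule A) (f : M -> N) (g : N -> P) :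
  is_hom f -> is_hom g -> is_hom (g \o f).
Proof.
move=> [fL fA] [gL gA]; split=> [k x y | a x] /=; first by rewrite fL gL.
by rewrite fA gA.
Qed.

Definition rank_one (g : M -> A) (eta : M) : M -> M := fun m => act (g m) eta.

Lemma rank_one_hom (g : M -> regular_lmodule A) (eta : M) :
  is_hom g -> End_A (rank_one g eta).
Proof.
move=> [gL gA]; split=> [k x y | a x]; rewrite /rank_one.
  by rewrite gL lm_linl.
by rewrite gA lm_actA.
Qed.

Variable e : A.

Lemma hom_to_Ae_hom (g : M -> A) :
  hom_to_Ae e g -> @is_hom A M (regular_lmodule A) g.
Proof. by case. Qed.

Hypothesis e_idem : e ** e = e.

Lemma in_Ae_mulr_idem (x : A) : in_Ae e x -> x ** e = x.
Proof. by case=> a ->; rewrite -nua_mulA e_idem. Qed.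

Lemma hom_from_Ae_eval (f : A -> M) (x : A) :
  hom_from_Ae e f -> in_Ae e x -> f x = act x (f e).
Proof.
move=> [_ fA] xAe; rewrite -{1}(in_Ae_mulr_idem xAe); apply: fA.
by exists e; rewrite e_idem.
Qed.

End Homs.

Section PseudoTrace.
Variables (A : nuAlgebra) (psi : A -> CC) (M : lmodule A).
Variables (e : A) (n : nat) (beta : 'I_n -> A -> M) (cbeta : 'I_n -> M -> A).
Hypothesis psi_SLF : SLF psi.
Hypothesis data : pseudotrace_data e beta cbeta.

Let Tr := right_pseudotrace psi e beta cbeta.

Lemma dual_basis_eval j m : beta j (cbeta j m) = act (cbeta j m) (beta j e).
Proof.
have [e_idem [beta_hom [cbeta_hom _]]] := data.
exact: (hom_from_Ae_eval e_idem (beta_hom j) ((cbeta_hom j).1 m)).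
Qed.

Lemma pseudotrace_rank_one (g : M -> regular_lmodule A) (eta : M) :
  is_hom g -> Tr (rank_one g eta) = psi (g eta).
Proof.
have [_ [_ [cbeta_hom dual_sum]]] := data; have [psiL psiS] := psi_SLF.
move=> [gL gA]; rewrite /Tr /right_pseudotrace /rank_one.
rewrite -{2}(dual_sum eta) (linear_for_sum gL) (linear_for_sum psiL).
apply: eq_bigr => j _.
by rewrite (cbeta_hom j).2.2 psiS dual_basis_eval gA.
Qed.

Lemma pseudotrace_nondegenerate :
  nondegenerate_SLF psi -> nondegenerate_B Tr.
Proof.
have [_ [_ [cbeta_hom dual_sum]]] := data; have [_ psiS] := psi_SLF.
move=> psi_nd x xE Tr_x0 m.
have cbeta_x0 k : cbeta k (x m) = 0.
  apply: psi_nd => a; rewrite psiS -(cbeta_hom k).2.2 -xE.2.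
  have cbeta_k_hom := hom_to_Ae_hom (cbeta_hom k).
  rewrite -(pseudotrace_rank_one _ (is_hom_comp xE cbeta_k_hom)).
  exact: Tr_x0 (rank_one_hom _ cbeta_k_hom).
rewrite -(dual_sum (x m)) big1 // => k _.
by rewrite dual_basis_eval cbeta_x0 act0l.
Qed.

End PseudoTrace.

(* The AUF, coherence and projectivity hypotheses only guarantee that
   pseudotrace data exist; here the data are given. *)
Theorem proposition10p3 (A : nuAlgebra) (psi : A -> CC) (M : lmodule A)
    (e : A) (n : nat) (beta : 'I_n -> A -> M) (cbeta : 'I_n -> M -> A) :
  AUF A -> SLF psi -> nondegenerate_SLF psi ->
  coherent M -> projective M ->
  pseudotrace_data e beta cbeta ->
  nondegenerate_B (right_pseudotrace psi e beta cbeta).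
Proof.
move=> _ psi_SLF psi_nd _ _ data.
exact: pseudotrace_nondegenerate.
Qed.
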